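(* Let $\mathbb{F}$ be any field. There exists a non-zero polynomial $Q \in \mathbb{F}[x_{1,1, 1}, \ldots, x_{n,n, n}]$ of degree at most $n^4$ such that $Q(\tau)=0$ for every three-dimensional tensor $\tau:[n]\times [n] \times [n] \to \mathbb{F}$ of rank at most $n^2/300$.
   Context: The rank of a tensor $\tau:[n]^3\to\mathbb{F}$ is the least $r$ such that $\tau=\sum_{i=1}^r u_i\otimes v_i\otimes w_i$ with $u_i,v_i,w_i\in\mathbb{F}^n$. $Q(\tau)$ denotes evaluation at $x_{i,j,k}=\tau(i,j,k)$. *)

From HB Require Import structures.
From mathcomp Require Import all_boot all_order all_algebra.
From mathcomp Require Import mpoly.
Set Implicit Arguments. Unset Strict Implicit. Unset Printing Implicit Defensive.
Import GRing.Theory.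
Local Open Scope ring_scope.

Definition idx3 (n : nat) : finType := ('I_n * 'I_n * 'I_n)%type.

Definition tensor3 (F : fieldType) (n : nat) := idx3 n -> F.

Definition rank_decomp (F : fieldType) (n r : nat) (tau : tensor3 F n) : Prop :=
  exists (u v w : 'I_r -> 'I_n -> F),
    forall i j k : 'I_n, tau (i, j, k) = \sum_(l < r) u l i * v l j * w l k.

(* rank tau <= s : the least r admitting a decomposition is at most s,
   i.e. some decomposition with at most s terms exists. *)
Definition tensor_rank_le (F : fieldType) (n : nat) (tau : tensor3 F n) (s : nat)
  : Prop := exists r : nat, (r <= s)%N /\ rank_decomp r tau.

(* Variables x_{i,j,k} are indexed by 'I_#|idx3 n| via enum_val;
   Q(tau) is evaluation at x_{i,j,k} := tau(i,j,k). *)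
Definition eval_tensor (F : fieldType) (n : nat)
  (Q : {mpoly F[#|idx3 n|]}) (tau : tensor3 F n) : F :=
  Q.@[fun c : 'I_#|idx3 n| => tau (enum_val c)].

From HB Require Import structures.
From mathcomp Require Import all_boot all_order all_algebra.
From mathcomp Require Import mpoly.
From mathcomp Require Import zify.
Set Implicit Arguments. Unset Strict Implicit. Unset Printing Implicit Defensive.
Import GRing.Theory.
Local Open Scope ring_scope.

(* Tensors of rank at most R are the values of the polynomial map P sending
   factor matrices (u, v, w) to sum_l u_l (x) v_l (x) w_l, a map from F^(3Rn) to
   F^(n^3) with cubic coordinates.  Composition with P is linear; it sends the
   (n+1)^(n^3) monomials in the x_ijk with all exponents at most n (hence of
   degree at most n^4) to polynomials in 3Rn variables of degree at most 3n^4,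
   which span a space of dimension at most (3n^4+1)^(3Rn).  For 15R <= n^2 this
   is fewer than (n+1)^(n^3), so a nonzero combination Q of those monomials has
   Q o P = 0, i.e. Q vanishes on every tensor of rank at most R. *)


Section DegreeBounds.
Variables (R : idomainType) (k : nat).
Implicit Types p q : {mpoly R[k]}.

Lemma msize_mul_le p q a b : (msize p <= a.+1)%N -> (msize q <= b.+1)%N ->
  (msize (p * q) <= (a + b).+1)%N.
Proof.
have [->|p0] := eqVneq p 0; first by rewrite mul0r msize0.
have [->|q0] := eqVneq q 0; first by rewrite mulr0 msize0.
rewrite msizeM // -subn1 => hp hq.
by apply: leq_trans (leq_sub2r 1 (leq_add hp hq)) _; lia.
Qed.

Lemma msize_exp_le p a e : (msize p <= a.+1)%N -> (msize (p ^+ e) <= (a * e).+1)%N.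
Proof.
move=> hp; elim: e => [|e IH]; first by rewrite expr0 msize1 muln0.
by rewrite exprS mulnS; exact: msize_mul_le hp IH.
Qed.

Lemma msize_prod_le (I : finType) (p : I -> {mpoly R[k]}) (a : I -> nat) :
  (forall i, msize (p i) <= (a i).+1)%N -> (msize (\prod_i p i) <= (\sum_i a i).+1)%N.
Proof.
move=> hp; apply: (big_rec2 (fun s q => msize q <= s.+1)%N); first by rewrite msize1.
by move=> i s q _; apply: msize_mul_le.
Qed.

Lemma msize_sum_le (I : Type) (r : seq I) (P : pred I) (p : I -> {mpoly R[k]}) b :
  (forall i, P i -> msize (p i) <= b)%N -> (msize (\sum_(i <- r | P i) p i) <= b)%N.
Proof.
move=> hp; apply: (big_ind (fun q => msize q <= b)%N) => //; first by rewrite msize0.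
by move=> q1 q2 h1 h2; apply: leq_trans (mmeasureD_le _ _ _) _; rewrite geq_max h1 h2.
Qed.

End DegreeBounds.

Lemma msize_comp_mpoly_le (R : idomainType) k l (p : {mpoly R[k]})
    (lq : k.-tuple {mpoly R[l]}) d :
  (forall i, msize (tnth lq i) <= d.+1)%N ->
  (msize (p \mPo lq) <= (d * (msize p).-1).+1)%N.
Proof.
move=> hlq; rewrite comp_mpolyE big_seq; apply: msize_sum_le => m /msize_mdeg_lt hm.
apply: leq_trans (msizeZ_le _ _) _.
apply: leq_trans (msize_prod_le (a := fun i => d * m i)%N _) _.
  by move=> i; apply: msize_exp_le.
by rewrite ltnS -big_distrr -mdegE leq_mul2l -ltnS (ltn_predK hm) hm orbT.
Qed.

Section BoundedExponents.
Variables (k d : nat).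

Definition mnm_of_ffun (f : {ffun 'I_k -> 'I_d.+1}) : 'X_{1..k} :=
  [multinom (f i : nat) | i < k].

Lemma mnm_of_ffun_inj : injective mnm_of_ffun.
Proof.
move=> f g /mnmP efg; apply/ffunP => i; apply/val_inj.
by have := efg i; rewrite !mnmE.
Qed.

Lemma mdeg_mnm_of_ffun f : (mdeg (mnm_of_ffun f) <= k * d)%N.
Proof.
rewrite mdegE; apply: leq_trans (_ : \sum_(i < k) d <= _)%N.
  by apply: leq_sum => i _; rewrite mnmE -ltnS.
by rewrite sum_nat_const card_ord.
Qed.

Lemma mnm_of_ffun_mdeg_le (m : 'X_{1..k}) :
  (mdeg m <= d)%N -> exists f, m = mnm_of_ffun f.
Proof.
move=> hm; exists [ffun i => inord (m i)]; apply/mnmP => i.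
rewrite !mnmE ffunE inordK // ltnS (leq_trans _ hm) //.
by rewrite mdegE (bigD1 i) //= leq_addr.
Qed.

Lemma mcoeff_sum_mnm_of_ffun (F : fieldType) (c : {ffun 'I_k -> 'I_d.+1} -> F) f :
  (\sum_g c g *: 'X_[mnm_of_ffun g] : {mpoly F[k]})@_(mnm_of_ffun f) = c f.
Proof.
rewrite raddf_sum (bigD1 f) //= mcoeffZ mcoeffX eqxx mulr1 big1 ?addr0 // => g gf.
by rewrite mcoeffZ mcoeffX (inj_eq mnm_of_ffun_inj) (negbTE gf) mulr0.
Qed.

Lemma sum_mnm_of_ffun_eq0 (F : fieldType) (c : {ffun {ffun 'I_k -> 'I_d.+1} -> F}) :
  (\sum_g c g *: 'X_[mnm_of_ffun g] == 0 :> {mpoly F[k]}) = (c == 0).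
Proof.
apply/eqP/eqP => [c0 | ->].
  by apply/ffunP => f; rewrite -mcoeff_sum_mnm_of_ffun c0 mcoeff0 ffunE.
by rewrite big1 // => f _; rewrite ffunE scale0r.
Qed.

Lemma mpoly_bounded_lin_dep (F : fieldType) (A : finType) (q : A -> {mpoly F[k]}) :
  (forall a, msize (q a) <= d.+1)%N -> (d.+1 ^ k < #|A|)%N ->
  exists2 c : {ffun A -> F}, c != 0 & \sum_a c a *: q a = 0.
Proof.
move=> hq hA.
(* Columns: the monomials with all exponents at most d, among which are all
   monomials of degree at most d. *)
pose M := \matrix_(a < #|A|, g < #|{ffun 'I_k -> 'I_d.+1}|)
  (q (enum_val a))@_(mnm_of_ffun (enum_val g)).
have /rowV0Pn [v /sub_kermxP vM v0] : kermx M != 0.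
  rewrite kermx_eq0 /row_free; apply: contraTN hA => /eqP <-.
  by rewrite -leqNgt (leq_trans (rank_leq_col M)) // card_ffun !card_ord.
exists [ffun a => v 0 (enum_rank a)].
  apply: contraNneq v0 => c0; apply/eqP/rowP => j.
  have := congr1 (fun c : {ffun A -> F} => c (enum_val j)) c0.
  by rewrite !ffunE enum_valK mxE.
apply/mpolyP => m; rewrite mcoeff0 raddf_sum.
have [/mnm_of_ffun_mdeg_le [f ->] | hm] := leqP (mdeg m) d.
  transitivity ((v *m M) 0 (enum_rank f)); last by rewrite vM mxE.
  rewrite mxE (reindex (fun j : 'I_#|A| => enum_val j)) /=; last first.
    by exists enum_rank => ? _; rewrite ?enum_valK ?enum_rankK.
  by apply: eq_bigr => a _; rewrite mcoeffZ ffunE enum_valK !mxE enum_rankK.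
rewrite big1 // => a _ /=; rewrite mcoeffZ.
by apply/eqP; rewrite mulf_eq0 mcoeff_eq0 msize_mdeg_ge ?orbT // (leq_trans (hq a)).
Qed.

End BoundedExponents.

Lemma card_idx3 n : #|idx3 n| = (n * n * n)%N.
Proof. by rewrite !card_prod !card_ord. Qed.

Lemma rank_decomp_widen (F : fieldType) n r R (tau : tensor3 F n) :
  (r <= R)%N -> rank_decomp r tau -> rank_decomp R tau.
Proof.
move=> hrR [u [v [w htau]]].
pose pad (f : 'I_r -> 'I_n -> F) (l : 'I_R) i := oapp (f^~ i) 0 (insub (val l)).
exists (pad u), (pad v), (pad w) => i j k.
rewrite htau (bigID (fun l : 'I_R => (l < r)%N)) /= [X in _ = _ + X]big1 ?addr0.
  by rewrite (big_ord_narrow hrR); apply: eq_bigr => l _; rewrite /pad /= valK.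
by move=> l hl; rewrite /pad insubN ?mul0r.
Qed.

(* One variable per entry of the factor matrices u, v, w : 'I_R -> 'I_n -> F. *)
Definition factor_var (n R : nat) : finType :=
  (('I_R * 'I_n) + ('I_R * 'I_n) + ('I_R * 'I_n))%type.

Lemma card_factor_var n R : #|factor_var n R| = (3 * R * n)%N.
Proof. rewrite !card_sum !card_prod !card_ord; lia. Qed.

Section GenericTensor.
Variables (F : fieldType) (n R : nat).
Local Notation var := #|factor_var n R|.

Definition factor_mvar (x : factor_var n R) : {mpoly F[var]} := 'X_(enum_rank x).

Definition generic_entry (c : idx3 n) : {mpoly F[var]} :=
  let: (i, j, k) := c in
  \sum_(l < R) factor_mvar (inl (inl (l, i))) * factor_mvar (inl (inr (l, j)))
               * factor_mvar (inr (l, k)).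

Definition generic_tensor : (#|idx3 n|).-tuple {mpoly F[var]} :=
  [tuple generic_entry (enum_val c) | c < #|idx3 n|].

Lemma msize_generic_tensor c : (msize (tnth generic_tensor c) <= 3.+1)%N.
Proof.
rewrite tnth_mktuple /generic_entry; case: (enum_val c) => [[i j] k].
apply: msize_sum_le => l _.
have hX x : (msize (factor_mvar x) <= 1.+1)%N by rewrite msizeX mdeg1.
exact: (msize_mul_le (msize_mul_le (hX _) (hX _)) (hX _)).
Qed.

Definition factor_point (u v w : 'I_R -> 'I_n -> F) (x : 'I_var) : F :=
  match enum_val x with
  | inl (inl (l, i)) => u l i
  | inl (inr (l, j)) => v l j
  | inr (l, k) => w l k
  end.

Lemma meval_generic_entry u v w i j k :
  (generic_entry (i, j, k)).@[factor_point u v w] = \sum_(l < R) u l i * v l j * w l k.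
Proof.
rewrite raddf_sum; apply: eq_bigr => l _.
by rewrite /= !mevalM !mevalXU /factor_point !enum_rankK.
Qed.

Lemma eval_tensor_rank_decomp_eq0 (Q : {mpoly F[#|idx3 n|]}) (tau : tensor3 F n) :
  Q \mPo generic_tensor = 0 -> rank_decomp R tau -> eval_tensor Q tau = 0.
Proof.
move=> QP0 [u [v [w htau]]].
rewrite -(meval0 (factor_point u v w)) -QP0 comp_mpoly_meval /eval_tensor.
apply: meval_eq => c; rewrite tnth_mktuple.
by case: (enum_val c) => [[i j] k]; rewrite htau meval_generic_entry.
Qed.

End GenericTensor.

Lemma card_exponents_lt n R : (0 < n)%N -> (15 * R <= n ^ 2)%N ->
  ((3 * n ^ 4).+1 ^ (3 * R * n) < n.+1 ^ (n * n * n))%N.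
Proof.
move=> hn hR; have [-> | R0] := posnP R.
  by rewrite !mul0n expn0 -{1}(expn0 n.+1) ltn_exp2l ?ltnS // !muln_gt0 hn.
have h5 : ((3 * n ^ 4).+1 < n.+1 ^ 5)%N by rewrite !expnS expn0 !muln1; nia.
have e0 : (0 < 3 * R * n)%N by rewrite !muln_gt0 R0 hn.
apply: leq_trans (_ : n.+1 ^ (5 * (3 * R * n)) <= _)%N.
  by rewrite [X in (_ < X)%N]expnM ltn_exp2r.
by rewrite leq_exp2l //; nia.
Qed.

Theorem theorem4p2 (F : fieldType) (n : nat) (hn : (0 < n)%N) :
  exists Q : {mpoly F[#|idx3 n|]},
    Q != 0 /\
    (msize Q <= (n ^ 4).+1)%N /\
    forall (tau : tensor3 F n) (s : nat),
      (300 * s <= n ^ 2)%N -> tensor_rank_le tau s -> eval_tensor Q tau = 0.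
Proof.
pose R := (n ^ 2 %/ 300)%N.
pose P := generic_tensor F n R.
pose mon := @mnm_of_ffun #|idx3 n| n.
have mdeg_mon f : (mdeg (mon f) <= n ^ 4)%N.
  by apply: leq_trans (mdeg_mnm_of_ffun f) _; rewrite card_idx3; lia.
have msize_comp_mon f : (msize ('X_[mon f] \mPo P) <= (3 * n ^ 4).+1)%N.
  apply: leq_trans (msize_comp_mpoly_le _ (@msize_generic_tensor F n R)) _.
  by rewrite msizeX ltnS leq_mul2l mdeg_mon orbT.
have [|c c0 cP0] := mpoly_bounded_lin_dep msize_comp_mon.
  rewrite card_ffun !card_ord card_idx3 card_factor_var.
  by apply: card_exponents_lt => //; rewrite /R; have := leq_divM (n ^ 2) 300; lia.
exists (\sum_f c f *: 'X_[mon f]); split; [|split].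
- by rewrite sum_mnm_of_ffun_eq0.
- apply: msize_sum_le => f _; apply: leq_trans (msizeZ_le _ _) _.
  by rewrite msizeX ltnS mdeg_mon.
move=> tau s hs [r [hrs /(rank_decomp_widen (R := R))]] htau.
apply: eval_tensor_rank_decomp_eq0 (htau _).
  by rewrite linear_sum -[RHS]cP0; apply: eq_bigr => f _; rewrite linearZ.
by rewrite leq_divRL //; lia.
Qed.
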